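(* Let $C \subseteq \mathbb{F}_q^n$ be a linear code of dimension $k$ with minimum distance $d$, and let $(d_1,\dots,d_k)$ be its weight hierarchy. Assume that there is an integer $i$ with $1 \leqslant i < k$ such that \[ d_k = \frac{q^k-1}{q^{k-i}(q^i-1)}\, d_i. \] Then $C$ is a constant weight code, and the common weight of its non-zero codewords is $d_k\dfrac{q^{k-1}(q-1)}{q^k-1}$.
   Context: For a subcode $D \subseteq C$ (a linear subspace), $\mathrm{Supp}(D)=\{x\in\{1,\dots,n\} : \exists d\in D,\ d_x\neq 0\}$ and $w(D)=\#\mathrm{Supp}(D)$; the weight of a codeword $c$ is the weight of the subcode it spans. For $1\leqslant r\leqslant k$, the $r$-th generalized Hamming weight is $d_r=\min\{w(D) : D \subseteq C \text{ a subcode of dimension } r\}$; the weight hierarchy is $(d_1,\dots,d_k)$, and $d_1=d$. A constant weight code is a code all of whose non-zero codewords have the same weight. *)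

From HB Require Import structures.
From mathcomp Require Import all_boot all_order all_algebra.
Set Implicit Arguments. Unset Strict Implicit. Unset Printing Implicit Defensive.
Import GRing.Theory.
Local Open Scope ring_scope.

Definition Supp (F : finFieldType) (n : nat) (D : {vspace 'rV[F]_n}) : {set 'I_n} :=
  [set x : 'I_n | [exists v : 'rV[F]_n, (v \in D) && (v ord0 x != 0)]].

Definition wD (F : finFieldType) (n : nat) (D : {vspace 'rV[F]_n}) : nat :=
  #|Supp D|.

Definition wt (F : finFieldType) (n : nat) (c : 'rV[F]_n) : nat := wD <[c]>%VS.

(* is_ghw C r m  <->  m is the r-th generalized Hamming weight d_r of C,
   i.e. m = min { w(D) : D subcode of C of dimension r } *)
Definition is_ghw (F : finFieldType) (n : nat) (C : {vspace 'rV[F]_n}) (r m : nat) : Prop :=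
  (exists2 D : {vspace 'rV[F]_n}, (D <= C)%VS /\ \dim D = r & wD D = m) /\
  (forall D : {vspace 'rV[F]_n}, (D <= C)%VS -> \dim D = r -> (m <= wD D)%N).

Definition constant_weight (F : finFieldType) (n : nat) (C : {vspace 'rV[F]_n}) : Prop :=
  forall c1 c2 : 'rV[F]_n, c1 \in C -> c2 \in C -> c1 != 0 -> c2 != 0 -> wt c1 = wt c2.

From HB Require Import structures.
From mathcomp Require Import all_boot all_order all_algebra all_field.
From mathcomp Require Import zify ring.
Set Implicit Arguments. Unset Strict Implicit. Unset Printing Implicit Defensive.
Import GRing.Theory Num.Theory.
Local Open Scope ring_scope.

(* Write S(E) for the sum of the weights of the codewords of a subcode E.
   Counting nonzero entries coordinate by coordinate gives
   q S(E) = (q - 1) |E| w(E).  The hypothesis on d_k and d_i then says that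
   every i-dimensional subcode E satisfies S(E) >= (q^i - 1)/(q^k - 1) S(C),
   the average of S over i-dimensional subcodes.  Expressing S(E) through the
   sum of S over the extensions E + <v> propagates this lower bound down to
   dimension one, where it is also an average; so it holds with equality for
   every line <c>, and S(<c>) = (q - 1) wt(c) forces all weights to agree. *)

Section TotalWeight.

Variables (F : finFieldType) (n : nat).
Local Notation q := #|F|.
Implicit Types (c u v w : 'rV[F]_n) (C D E : {vspace 'rV[F]_n}).

Let q_gt0 : (0 < q)%N := ltnW (card_finNzRing_gt1 F).

Lemma wtE c : wt c = #|[set x | c ord0 x != 0%R]|.
Proof.
rewrite /wt /wD /Supp; apply: eq_card => x; rewrite !inE.
apply/existsP/idP => [[v /andP[/vlineP[a ->]]]|cx]; last by exists c; rewrite memv_line.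
by rewrite mxE mulf_eq0 negb_or => /andP[].
Qed.

(* Translating by a multiple of [v] is a bijection between the fibres of the
   coordinate map [c |-> c x] on [D], so they all have the same size. *)
Lemma card_coord_eq0 D x v : v \in D -> v ord0 x != 0 ->
  (q * #|[pred c in D | c ord0 x == 0%R]| = #|D|)%N.
Proof.
move=> vD vx.
rewrite -[in RHS]sum1_card (partition_big (fun c => c ord0 x) predT) //=.
rewrite -sum_nat_const; apply: eq_bigr => a _; rewrite -sum1_card.
rewrite (reindex_inj (addrI (- (a / v ord0 x) *: v))) /=.
apply: eq_bigl => c; rewrite !inE rpredDl ?memvZ //.
by rewrite !mxE mulNr divfK // addrC subr_eq0.
Qed.

Lemma card_coord_neq0 D x v : v \in D -> v ord0 x != 0 ->
  (q * #|[pred c in D | c ord0 x != 0%R]| = (q - 1) * #|D|)%N.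
Proof.
move=> vD vx; have fibre := card_coord_eq0 vD vx.
have cardD : (#|[pred c in D | c ord0 x == 0%R]| + #|[pred c in D | c ord0 x != 0%R]|
    = #|D|)%N.
  rewrite -(cardID (fun c => c ord0 x == 0) D).
  by congr addn; apply: eq_card => c; rewrite !inE // andbC.
by rewrite mulnBl mul1n -{2}fibre -cardD mulnDr addKn.
Qed.

Definition total_weight E := (\sum_(c in E) wt c)%N.

Lemma total_weightE E : (q * total_weight E = (q - 1) * #|E| * wD E)%N.
Proof.
have -> : total_weight E = (\sum_x #|[pred c in E | c ord0 x != 0%R]|)%N.
  rewrite /total_weight; under eq_bigr do rewrite wtE -sum1_card big_mkcond /=.
  rewrite exchange_big /=; apply: eq_bigr => x _.
  by rewrite -sum1_card big_mkcondr /=; apply: eq_bigr => c _; rewrite inE.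
rewrite big_distrr /wD -sum1_card big_distrr /= [RHS]big_mkcond /=.
apply: eq_bigr => x _; rewrite inE.
case: existsP => [[v /andP[vE vx]]|noSupp]; first by rewrite muln1 (card_coord_neq0 vE vx).
rewrite (@eq_card0 _ [pred c in E | c ord0 x != 0%R]) ?muln0 // => c; rewrite !inE.
by apply/negP => cx; apply: noSupp; exists c.
Qed.

Lemma total_weight_line c : c != 0 -> total_weight <[c]> = ((q - 1) * wt c)%N.
Proof.
move=> c0; apply/eqP; rewrite -(eqn_pmul2l q_gt0) total_weightE.
by rewrite card_vspace dim_vline c0 expn1 /wt mulnCA mulnA.
Qed.

Lemma total_weight0 : total_weight 0 = 0%N.
Proof.
rewrite /total_weight (big_pred1 0) => [|c]; last by rewrite memv0.
by rewrite wtE; apply/eqP; rewrite cards_eq0; apply/eqP/setP => x; rewrite !inE mxE eqxx.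
Qed.

Lemma big_subv_split C E (f : 'rV[F]_n -> nat) : (E <= C)%VS ->
  (\sum_(c in C) f c = \sum_(c in E) f c + \sum_(c in C | c \notin E) f c)%N.
Proof.
move=> EC; rewrite (bigID (mem E)) /=; congr (_ + _)%N.
by apply: eq_bigl => c; case cE: (c \in E); rewrite ?andbT ?andbF ?(subvP EC).
Qed.

Lemma sum1_subv_compl C E : (E <= C)%VS ->
  (\sum_(c in C | c \notin E) 1 = #|C| - #|E|)%N.
Proof.
by move=> EC; have := big_subv_split (fun=> 1%N) EC; rewrite !sum1_card => ->; rewrite addKn.
Qed.

Lemma total_weight_subv C E : (E <= C)%VS -> (total_weight E <= total_weight C)%N.
Proof. by move=> EC; rewrite /total_weight (big_subv_split _ EC) leq_addr. Qed.

Lemma dim_add_line E c : c \notin E -> \dim (E + <[c]>) = (\dim E).+1.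
Proof.
move=> cE; have c0 : c != 0 by apply: contraNneq cE => ->; apply: mem0v.
rewrite dimv_disjoint_sum ?dim_vline ?c0 ?addn1 //.
apply/eqP; rewrite -subv0; apply/subvP => w /memv_capP[wE /vlineP[a wa]].
rewrite memv0; move: wE; rewrite wa; have [->|a0] := eqVneq a 0; first by rewrite scale0r.
by move=> acE; case/negP: cE; rewrite -[c](scalerK a0) memvZ.
Qed.

Lemma card_add_line E c : c \notin E -> #|(E + <[c]>)%VS| = (q * #|E|)%N.
Proof. by move=> cE; rewrite !card_vspace dim_add_line // expnS. Qed.

Lemma memv_add_line_sym E u w :
  u \notin E -> u \in (E + <[w]>)%VS -> w \in (E + <[u]>)%VS.
Proof.
move=> uE /memv_addP[e eE [z /vlineP[a ->] ue]].
have a0 : a != 0 by apply: contraNneq uE => a0; rewrite ue a0 scale0r addr0.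
have -> : w = a^-1 *: (u - e) by rewrite ue addrC addKr scalerA mulVf ?scale1r.
by rewrite memvZ // memvB // ?(subvP (addvSr E _) _ (memv_line u)) ?(subvP (addvSl E _) _ eE).
Qed.

(* Double counting: a vector [c] of [C] outside [E] lies in [E + <[v]>] for
   exactly the [#|E + <[c]>| - #|E|] vectors [v] of [E + <[c]>] outside [E],
   while the vectors of [E] lie in all of these extensions. *)
Lemma sum_total_weight_add_line C E : (E <= C)%VS ->
  (\sum_(v in C | v \notin E) total_weight (E + <[v]>)
   = (#|C| - #|E|) * total_weight E + (q * #|E| - #|E|) * (total_weight C - total_weight E))%N.
Proof.
move=> EC; have EvC v : v \in C -> (E + <[v]> <= C)%VS by rewrite subv_add EC -memvE.
transitivity (\sum_(v in C | v \notin E)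
    \sum_(c in C) (if c \in (E + <[v]>)%VS then wt c else 0))%N.
  apply: eq_bigr => v /andP[vC _]; rewrite (big_subv_split _ (EvC v vC)) /=.
  rewrite [X in (_ + X)%N]big1 ?addn0 => [|c /andP[_ /negbTE ->] //].
  by apply: eq_bigr => c ->.
rewrite exchange_big /= (big_subv_split _ EC) /=; congr addn.
  rewrite /total_weight big_distrr /=; apply: eq_bigr => c cE.
  rewrite -(sum1_subv_compl EC) big_distrl /=; apply: eq_bigr => v _.
  by rewrite (subvP (addvSl E _) c cE) mul1n.
have -> : (total_weight C - total_weight E = \sum_(c in C | c \notin E) wt c)%N.
  by rewrite /total_weight (big_subv_split _ EC) addKn.
rewrite big_distrr /=; apply: eq_bigr => c /andP[cC cE].
rewrite -big_mkcondr /=; under eq_bigr do rewrite -[wt c]mul1n.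
rewrite -big_distrl /=; congr muln.
rewrite -(card_add_line cE) -(sum1_subv_compl (addvSl E <[c]>)).
apply: eq_bigl => v; apply/idP/idP.
  by case/andP=> /andP[vC vE] cEv; rewrite vE andbT (memv_add_line_sym cE).
by case/andP=> vEc vE; rewrite vE andbT (subvP (EvC c cC)) //= (memv_add_line_sym vE).
Qed.

End TotalWeight.

(* The difference of the two sides of the hypothesis is
   [(Y - q X) (a (Y - 1) - (X - 1) b)]. *)
Lemma leq_average_descent (q X Y a b : nat) :
  (0 < q)%N -> (q * X < Y)%N -> (0 < X)%N -> (a <= b)%N ->
  ((Y - X) * (q * X - 1) * b <= (Y - 1) * ((Y - X) * a + (q * X - X) * (b - a)))%N ->
  ((X - 1) * b <= a * (Y - 1))%N.
Proof.
move=> q0 qXY X0 ab h.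
have XqX : (X <= q * X)%N by rewrite leq_pmull.
rewrite -lez_nat !PoszM -!subzn //; last by lia.
move: h; rewrite -lez_nat !PoszM !PoszD !PoszM -!subzn //; try lia.
rewrite -subr_ge0 => h.
have : 0 <= (Y%:Z - q%:Z * X%:Z) * (a%:Z * (Y%:Z - 1) - (X%:Z - 1) * b%:Z).
  by move: h; congr (_ <= _); ring.
by rewrite pmulr_rge0 ?subr_ge0 // subr_gt0 -PoszM ltz_nat.
Qed.

Section AboveAverage.

Variables (F : finFieldType) (n : nat).
Local Notation q := #|F|.
Implicit Types (c v : 'rV[F]_n) (C E : {vspace 'rV[F]_n}).

Let q_gt1 : (1 < q)%N := card_finNzRing_gt1 F.
Let q_gt0 : (0 < q)%N := ltnW q_gt1.

(* Every nonzero vector of [C] lies in equally many [j]-dimensional subcodes,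
   so [(q ^ j - 1) / (q ^ \dim C - 1) * total_weight C] is the average total
   weight of the [j]-dimensional subcodes of [C]. *)
Definition above_average C j := forall E, (E <= C)%VS -> \dim E = j ->
  ((q ^ j - 1) * total_weight C <= total_weight E * (q ^ \dim C - 1))%N.

Lemma above_average_pred C j :
  (j.+1 < \dim C)%N -> above_average C j.+1 -> above_average C j.
Proof.
move=> jk avg E EC dE.
have cardC : #|C| = (q ^ \dim C)%N by rewrite card_vspace.
have cardE : #|E| = (q ^ j)%N by rewrite card_vspace dE.
apply: (@leq_average_descent q); rewrite ?expn_gt0 ?(ltnW q_gt1) ?total_weight_subv //.
  by rewrite -expnS ltn_exp2l.
rewrite -cardC -cardE -(sum_total_weight_add_line EC) -(sum1_subv_compl EC).
rewrite -mulnA [X in (X <= _)%N]big_distrl [X in (_ <= X)%N]big_distrr /=.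
apply: leq_sum => v /andP[vC vE].
rewrite mul1n [X in (_ <= X)%N]mulnC cardE -expnS cardC.
apply: avg; last by rewrite dim_add_line ?dE.
by rewrite subv_add EC -memvE.
Qed.

Lemma above_average_le C i j :
  (i < \dim C)%N -> above_average C i -> (j <= i)%N -> above_average C j.
Proof.
elim: i => [|i IH] ik avg; first by rewrite leqn0 => /eqP->.
rewrite leq_eqVlt => /orP[/eqP-> //|ji].
by apply: IH (ltnW ik) (above_average_pred ik avg) ji.
Qed.

Lemma sum_total_weight_line C :
  (\sum_(v in C | v \notin 0%VS) total_weight <[v]> = (q - 1) * total_weight C)%N.
Proof.
have := sum_total_weight_add_line (sub0v C).
rewrite total_weight0 (card_vspace 0%VS) dimv0 muln0 add0n muln1 subn0 => <-.
by apply: eq_bigr => v _; rewrite add0v.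
Qed.

(* Averaging is tight for [j = 1], so the lower bound holds with equality. *)
Lemma above_average1_total_weight_line C c : above_average C 1 -> c \in C -> c != 0 ->
  (total_weight <[c]> * (q ^ \dim C - 1) = (q - 1) * total_weight C)%N.
Proof.
move=> avg cC c0; set k := \dim C.
have bound v : (v \in C) && (v \notin 0%VS) ->
    ((q - 1) * total_weight C <= total_weight <[v]> * (q ^ k - 1)
     ?= iff ((q - 1) * total_weight C == total_weight <[v]> * (q ^ k - 1)))%N.
  case/andP=> vC; rewrite memv0 => v0; apply/leqif_eq; rewrite -[q]expn1.
  by apply: avg; rewrite ?dim_vline ?v0 -?memvE.
have sums : (\sum_(v in C | v \notin 0%VS) (q - 1) * total_weight C
    == \sum_(v in C | v \notin 0%VS) total_weight <[v]> * (q ^ k - 1))%N.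
  rewrite -[X in (_ == X)%N]big_distrl /= sum_total_weight_line.
  rewrite (eq_bigr (fun=> 1 * ((q - 1) * total_weight C))%N) => [|v _]; last by rewrite mul1n.
  rewrite -big_distrl /= sum1_subv_compl ?sub0v // !card_vspace dimv0.
  by rewrite mulnC.
have := (leqif_sum bound).2; rewrite sums => /esym/forall_inP/(_ c).
by rewrite cC memv0 c0 => /(_ isT) /eqP.
Qed.

Lemma ghw_dim_wD C dk : is_ghw C (\dim C) dk -> wD C = dk.
Proof. by case=> [[D [DC dD] <-] _]; have -> : D = C by apply/eqP; rewrite eqEdim DC dD leqnn. Qed.

Lemma above_average1_wt C c : above_average C 1 -> c \in C -> c != 0 ->
  (wt c * (q ^ \dim C - 1) = wD C * (q ^ (\dim C).-1 * (q - 1)))%N.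
Proof.
move=> avg cC c0; set k := \dim C.
have k_gt0 : (0 < k)%N by move: cC; rewrite memvE => /dimvS; rewrite dim_vline c0.
have qk : (q ^ k = q * q ^ k.-1)%N by rewrite -expnS prednK.
have := above_average1_total_weight_line avg cC c0; rewrite total_weight_line // => wt_line.
apply/eqP; rewrite -(@eqn_pmul2l (q * (q - 1))) ?muln_gt0 ?q_gt0 ?subn_gt0 //; apply/eqP.
transitivity (q * ((q - 1) * wt c * (q ^ k - 1)))%N; first ring.
by rewrite wt_line mulnCA total_weightE card_vspace qk; ring.
Qed.

Lemma ghw_above_average C i di dk : (i <= \dim C)%N ->
  is_ghw C i di -> is_ghw C (\dim C) dk ->
  (dk * (q ^ (\dim C - i) * (q ^ i - 1)) = (q ^ \dim C - 1) * di)%N ->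
  above_average C i.
Proof.
move=> ik [_ ghw_min] /ghw_dim_wD wDC hyp E EC dE; set k := \dim C.
have qk : (q ^ k = q ^ (k - i) * q ^ i)%N by rewrite -expnD subnK.
have SC : (q * ((q ^ i - 1) * total_weight C) = (q - 1) * q ^ i * (q ^ k - 1) * di)%N.
  rewrite mulnCA total_weightE card_vspace wDC -/k.
  transitivity ((q - 1) * q ^ i * (dk * (q ^ (k - i) * (q ^ i - 1))))%N.
    by rewrite qk; ring.
  by rewrite hyp; ring.
have SE : (q * (total_weight E * (q ^ k - 1)) = (q - 1) * q ^ i * (q ^ k - 1) * wD E)%N.
  by rewrite mulnA total_weightE card_vspace dE mulnAC.
by rewrite -(leq_pmul2l q_gt0) SC SE leq_mul // ghw_min.
Qed.

End AboveAverage.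

Theorem proposition1 (F : finFieldType) (n : nat) (C : {vspace 'rV[F]_n})
  (i di dk : nat) :
  let q := #|F| in
  let k := \dim C in
  (1 <= i < k)%N ->
  is_ghw C i di -> is_ghw C k dk ->
  (* d_k = (q^k-1)/(q^(k-i)(q^i-1)) * d_i, cleared of denominators *)
  (dk * (q ^ (k - i) * (q ^ i - 1)) = (q ^ k - 1) * di)%N ->
  constant_weight C /\
  (forall c : 'rV[F]_n, c \in C -> c != 0 ->
     (* wt c = d_k * q^(k-1)(q-1)/(q^k-1), cleared of denominators *)
     (wt c * (q ^ k - 1) = dk * (q ^ (k - 1) * (q - 1)))%N).
Proof.
move=> q k /andP[i_gt0 ik] ghw_i ghw_k hyp.
have avg1 : above_average C 1.
  exact: above_average_le ik (ghw_above_average (ltnW ik) ghw_i ghw_k hyp) i_gt0.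
have wt_nonzero c : c \in C -> c != 0 ->
    (wt c * (q ^ k - 1) = dk * (q ^ (k - 1) * (q - 1)))%N.
  by move=> cC c0; rewrite /q /k above_average1_wt // (ghw_dim_wD ghw_k) -subn1.
have qk_pos : (0 < q ^ k - 1)%N.
  by rewrite subn_gt0 -(expn0 q) ltn_exp2l ?card_finNzRing_gt1 //; lia.
split=> // c1 c2 c1C c2C c10 c20.
by apply/eqP; rewrite -(eqn_pmul2r qk_pos) !wt_nonzero.
Qed.
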